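(* For integers $m\ge1$ and $k\ge0$, $$\mu(N|_m,k,J)\equiv\begin{cases}1\pmod 2,&\text{if }k=0,\\ 0\pmod 2,&\text{if }k\ge1.\end{cases}$$
   Context: Let $N=\{0,1,2,\ldots\}$ and $J=\{(2n+1)2^{2k}-1 : n,k\in N\}=\{0,2,3,4,6,8,10,11,\ldots\}$. For an infinite set $A\subseteq N$, $A|_m$ denotes the set of the $m$ smallest elements of $A$. An involution on a finite set $A$ is a permutation $\sigma$ of $A$ with $\sigma=\sigma^{-1}$; its cycles are fixed points and transpositions $(c,d)$. A transposition $(c,d)$ is said to be in a set $B$ if $c+d\in B$. For a finite set $A\subseteq N$, an integer $k\ge0$ and a set $B\subseteq N$, $\mu(A,k,B)$ denotes the number of involutions of $A$ having exactly $k$ transpositions, all of which are in $B$. *)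

From mathcomp Require Import all_boot all_fingroup.
Set Implicit Arguments. Unset Strict Implicit. Unset Printing Implicit Defensive.

(* J = {(2n+1) 2^(2k) - 1 : n, k in N}.  Membership as a boolean; the witnesses
   n, k are bounded by x+1, which loses nothing since (2n+1)2^(2k) - 1 >= n, k. *)
Definition inJ (x : nat) : bool :=
  [exists n : 'I_(x.+2), exists k : 'I_(x.+2),
     x == (2 * n + 1) * 2 ^ (2 * k) - 1].

(* N|_m = {0, ..., m-1}, represented by 'I_m (the element i : 'I_m is the
   natural number i).  An involution of N|_m is a permutation s with s*s = 1.
   Its transpositions are the 2-cycles (c, s c) with c <> s c; each is counted
   once via its smaller element c < s c.  A transposition (c,d) is in B iff
   c + d \in B. *)
Definition involution m (s : {perm 'I_m}) : bool := (s * s == 1)%g.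

Definition num_transp m (s : {perm 'I_m}) : nat := #|[set c : 'I_m | c < s c]|.

Definition transp_in m (B : nat -> bool) (s : {perm 'I_m}) : bool :=
  [forall c : 'I_m, (s c != c) ==> B (c + s c)].

Definition mu (m k : nat) (B : nat -> bool) : nat :=
  #|[set s : {perm 'I_m} | [&& involution s, num_transp s == k & transp_in B s]]|.

(* In characteristic 2 the determinant of a symmetric matrix is a sum over its
   involutions, so mu(N|_m, k, J) mod 2 is the coefficient of X^(m-2k) in det M_m
   over F_2[X], where M_m = X I + A_m and A_m is the adjacency matrix of the
   graph on {0, ..., m-1} joining c <> d when c + d is in J.  The theorem thus
   says det M_m = X^m.
   J is self-similar: 2x is in J, and 2x+1 is in J iff x is not.  After grouping
   the indices by parity, row and column operations make M_2n block triangular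
   with two diagonal blocks M_n, so det M_2n = (det M_n)^2.  For odd sizes,
   det M_(m+1) = X det M_m + b_m, where b_m is the determinant of M_m bordered by
   its next column and row with corner 0.  The characteristic-2 identity
   det(M) (v^T adj(M) v) = X (1^T adj(M) v)^2, for symmetric M with diagonal X,
   relates b_m to c_m, the determinant of M_m bordered by the same column and a
   row of ones, and the parity grouping gives c_2n = det M_n * c_n.  Hence
   b_n = 0 forces c_n = 0, then c_2n = 0, b_2n = 0 and det M_(2n+1) = X det M_2n. *)

From mathcomp Require Import all_boot all_fingroup all_algebra zify.
Set Implicit Arguments. Unset Strict Implicit. Unset Printing Implicit Defensive.
Import GRing.Theory.

Lemma inJ_logn x : inJ x = ~~ odd (logn 2 x.+1).
Proof.
apply/idP/idP.
  case/existsP=> n /existsP [k /eqP ->].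
  have pos : 0 < (2 * n + 1) * 2 ^ (2 * k) by rewrite muln_gt0 expn_gt0 /=; lia.
  rewrite subn1 prednK // logn_Gauss ?coprime2n; last by rewrite addn1 /= oddM.
  by rewrite pfactorK // oddM.
move=> even_e; have [r odd_r Ex] := pfactor_coprime (isT : prime 2) (ltn0Sn x).
rewrite coprime2n in odd_r; set e := logn 2 x.+1 in Ex even_e.
have Ee : e = (e./2).*2 by rewrite -[LHS]odd_double_half (negbTE even_e).
have Er : r = 2 * r./2 + 1 by rewrite -[LHS]odd_double_half odd_r addnC mul2n.
have r_gt0 : 0 < r by case: r odd_r {Ex Er}.
have le_e : e < x.+2.
  by rewrite ltnS (leq_trans (ltnW (ltn_expl e (isT : 1 < 2)))) // Ex leq_pmull.
have le_r : r <= x.+1 by rewrite Ex leq_pmulr // expn_gt0.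
apply/existsP; exists (inord r./2); apply/existsP; exists (inord e./2).
rewrite !inordK; [|lia|lia].
by rewrite -Er mul2n -Ee -Ex subn1.
Qed.

Lemma inJ_double x : inJ (2 * x).
Proof. by rewrite inJ_logn logn_coprime // coprime2n -addn1 oddD oddM. Qed.

Lemma inJ_double_add1 x : inJ (2 * x + 1) = ~~ inJ x.
Proof. by rewrite !inJ_logn addn1 -(addn1 (2 * x)) -addnS -mulnSr lognM. Qed.

Local Open Scope ring_scope.

Section CharTwo.
Variable R : comNzRingType.
Hypothesis R2 : 2 \in [pchar R].

Lemma sum_fixfree_involution (T : finType) (P : pred T) (g : T -> T) (F : T -> R) :
    involutive g -> (forall x, P (g x) = P x) -> (forall x, P x -> g x != x) ->
    (forall x, F (g x) = F x) ->
  \sum_(x | P x) F x = 0.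
Proof.
move=> gK Pg g_neq Fg; pose r (x : T) : nat := enum_rank x.
rewrite (bigID (fun x => r x < r (g x))%N) /=.
rewrite [X in _ + X](reindex_inj (can_inj gK)) /=.
rewrite -[RHS](addrr_pchar2 R2 (\sum_(x | P x && (r x < r (g x))%N) F x)).
congr (_ + _); apply: eq_big => [x|x _]; rewrite ?Fg // Pg gK.
case Px: (P x) => //=; rewrite -leqNgt leq_eqVlt.
suff /negbTE -> : r x != r (g x) by [].
by apply: contraNneq (g_neq x Px) => /val_inj/enum_rank_inj xg; rewrite -xg.
Qed.

Lemma sum_sym_diag n (F : 'I_n -> 'I_n -> R) :
  (forall i j, F i j = F j i) -> \sum_i \sum_j F i j = \sum_i F i i.
Proof.
move=> Fsym; rewrite pair_bigA /= (bigID (fun ij => ij.1 != ij.2)) /=.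
rewrite (sum_fixfree_involution (g := fun ij => (ij.2, ij.1))) ?add0r.
- rewrite (reindex_onto (fun i => (i, i)) fst) /=; last by move=> [i j] /= /negPn/eqP ->.
  by apply: eq_bigl => i; rewrite !eqxx.
- by case.
- by move=> [i j]; rewrite eq_sym.
- by move=> [i j] /= ij; rewrite xpair_eqE eq_sym (negbTE ij).
- by move=> [i j]; rewrite Fsym.
Qed.

Lemma det_sym_involutions n (A : 'M[R]_n) : A^T = A ->
  \det A = \sum_(s : 'S_n | involution s) \prod_i A i (s i).
Proof.
move=> Asym; rewrite /determinant.
under eq_bigr do rewrite (oppr_pchar2 R2) expr1n mul1r.
rewrite (bigID (fun s => ~~ involution s)) /=.
rewrite (sum_fixfree_involution (g := invg)) ?add0r.
- by apply: eq_bigl => s; rewrite negbK.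
- exact: invgK.
- by move=> s; rewrite /involution -invMg invg_eq1.
- by move=> s; apply: contraNneq => sV; rewrite /involution -{1}sV mulVg.
move=> s; rewrite (reindex_inj (@perm_inj _ s)) /=.
by apply: eq_bigr => i _; rewrite permK -[in LHS]Asym mxE.
Qed.

Lemma quad_form_sym n (B : 'M[R]_n) x (w : 'cV_n) :
    B^T = B -> (forall i, B i i = x) ->
  (w^T *m B *m w) 0 0 = x * (\sum_i w i 0) ^+ 2.
Proof.
move=> Bsym Bdiag.
have -> : (\sum_i w i 0) ^+ 2 = \sum_i w i 0 ^+ 2.
  by rewrite -(pFrobenius_autE R2) rmorph_sum.
rewrite mulr_sumr mxE.
under eq_bigr do rewrite mxE mulr_suml.
rewrite (sum_sym_diag (F := fun i j => w^T 0 j * B j i * w i 0)).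
  by apply: eq_bigr => i _; rewrite mxE Bdiag mulrAC mulrC expr2.
move=> i j; rewrite !mxE -[in B j i]Bsym mxE.
by rewrite mulrC mulrA [RHS]mulrAC.
Qed.

Lemma det_mul_adj_quad n (B : 'M[R]_n) x (v : 'cV_n) :
    B^T = B -> (forall i, B i i = x) ->
  \det B * (v^T *m \adj B *m v) 0 0
    = x * ((const_mx 1 : 'rV_n) *m (\adj B *m v)) 0 0 ^+ 2.
Proof.
move=> Bsym Bdiag; set w := \adj B *m v.
have Bw : B *m w = \det B *: v by rewrite /w mulmxA mul_mx_adj mul_scalar_mx.
have wB : w^T *m B = \det B *: v^T by rewrite -[B in LHS]Bsym -trmx_mul Bw linearZ.
have -> : ((const_mx 1 : 'rV_n) *m w) 0 0 = \sum_i w i 0.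
  by rewrite mxE; apply: eq_bigr => i _; rewrite mxE mul1r.
by rewrite -(quad_form_sym w Bsym Bdiag) wB -scalemxAl [RHS]mxE /w mulmxA.
Qed.

End CharTwo.

Definition catidx n1 n2 (f1 : 'I_n1 -> nat) (f2 : 'I_n2 -> nat) (i : 'I_(n1 + n2)) :=
  match split i with inl a => f1 a | inr b => f2 b end.

Lemma catidx_inj n1 n2 (f1 : 'I_n1 -> nat) (f2 : 'I_n2 -> nat) :
    injective f1 -> injective f2 -> (forall a b, f1 a != f2 b) ->
  injective (catidx f1 f2).
Proof.
move=> f1_inj f2_inj f12 i j; rewrite /catidx.
case: split_ordP => a ->; case: split_ordP => b ->.
- by move/f1_inj->.
- by move/eqP; rewrite (negbTE (f12 a b)).
- by move/eqP; rewrite eq_sym (negbTE (f12 b a)).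
- by move/f2_inj->.
Qed.

Lemma catidx_lt n1 n2 (f1 : 'I_n1 -> nat) (f2 : 'I_n2 -> nat) p i :
  (forall a, f1 a < p)%N -> (forall b, f2 b < p)%N -> (catidx f1 f2 i < p)%N.
Proof. by rewrite /catidx; case: split. Qed.

Section Blocks.
Variable R : comNzRingType.

Lemma matrix_catidx_row (G : nat -> nat -> R) m1 m2 n
    (f1 : 'I_m1 -> nat) (f2 : 'I_m2 -> nat) (g : 'I_n -> nat) :
  \matrix_(i, j) G (catidx f1 f2 i) (g j)
  = col_mx (\matrix_(i, j) G (f1 i) (g j)) (\matrix_(i, j) G (f2 i) (g j)).
Proof. by apply/matrixP=> i j; rewrite !mxE /catidx; case: (split i) => a; rewrite ?mxE. Qed.

Lemma matrix_catidx_col (G : nat -> nat -> R) m n1 n2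
    (f : 'I_m -> nat) (g1 : 'I_n1 -> nat) (g2 : 'I_n2 -> nat) :
  \matrix_(i, j) G (f i) (catidx g1 g2 j)
  = row_mx (\matrix_(i, j) G (f i) (g1 j)) (\matrix_(i, j) G (f i) (g2 j)).
Proof. by apply/matrixP=> i j; rewrite !mxE /catidx; case: (split j) => b; rewrite ?mxE. Qed.

Lemma matrix_catidx (G : nat -> nat -> R) m1 m2 n1 n2
    (f1 : 'I_m1 -> nat) (f2 : 'I_m2 -> nat) (g1 : 'I_n1 -> nat) (g2 : 'I_n2 -> nat) :
  \matrix_(i, j) G (catidx f1 f2 i) (catidx g1 g2 j)
  = block_mx (\matrix_(i, j) G (f1 i) (g1 j)) (\matrix_(i, j) G (f1 i) (g2 j))
             (\matrix_(i, j) G (f2 i) (g1 j)) (\matrix_(i, j) G (f2 i) (g2 j)).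
Proof. by rewrite matrix_catidx_row !matrix_catidx_col. Qed.

Lemma matrix_split_last (G : nat -> nat -> R) n :
  \matrix_(i < n + 1, j < n + 1) G i j
  = block_mx (\matrix_(i < n, j < n) G i j) (\col_i G i n) (\row_j G n j) (G n n)%:M.
Proof.
have catE (k : 'I_(n + 1)) : catidx val (fun _ : 'I_1 => n) k = k.
  by rewrite /catidx; case: split_ordP => a ->; rewrite ?ord1 /= ?addn0.
transitivity (\matrix_(i < n + 1, j < n + 1) G (catidx val (fun _ : 'I_1 => n) i)
                               (catidx val (fun _ : 'I_1 => n) j)).
  by apply/matrixP=> i j; rewrite !mxE !catE.
rewrite matrix_catidx; congr block_mx; apply/matrixP=> i j; rewrite !mxE //.
by rewrite !ord1 mulr1n.
Qed.

Lemma det_reindex p (G : nat -> nat -> R) (f : 'I_p -> nat) :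
    injective f -> (forall i, f i < p)%N ->
  \det (\matrix_(i, j) G (f i) (f j)) = \det (\matrix_(i < p, j < p) G i j).
Proof.
move=> f_inj f_lt; pose h i := Ordinal (f_lt i).
have h_inj : injective h by move=> i j /(congr1 val) /f_inj.
pose s := perm h_inj.
have -> : \matrix_(i, j) G (f i) (f j) = row_perm s (col_perm s (\matrix_(i, j) G i j)).
  by apply/matrixP=> i j; rewrite !mxE !permE.
rewrite row_permE col_permE !det_mulmx !det_perm odd_permV mulrCA -signr_addb.
by rewrite addbb mulr1.
Qed.

Lemma det_block_lconj n1 n2 (A : 'M[R]_n1) (B : 'M_(n1, n2)) (C : 'M_(n2, n1))
    (D : 'M_n2) (P : 'M_(n2, n1)) :
    P *m A + C + (P *m B + D) *m P = 0 ->
  \det (block_mx A B C D) = \det (A + B *m P) * \det (P *m B + D).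
Proof.
move=> PABCD0; pose T := block_mx 1%:M 0 P 1%:M.
have detT : \det T = 1 by rewrite det_lblock !det1 mulr1.
rewrite -[LHS]mul1r -detT -[LHS]mulr1 -detT -!det_mulmx.
rewrite !mulmx_block !mul1mx !mul0mx !mulmx1 !mulmx0 !addr0 !add0r.
by rewrite PABCD0 det_ublock.
Qed.

Lemma mul_mx_pid_col m n1 n2 (A : 'M[R]_(m, n1 + n2)) :
  A *m (pid_mx n1 : 'M_(n1 + n2, n1)) = lsubmx A.
Proof.
by rewrite pid_mx_col -[A in LHS]hsubmxK mul_row_col mulmx1 mulmx0 addr0.
Qed.

Lemma mul_pid_col_mx n1 n2 n (A : 'M[R]_(n1, n)) :
  (pid_mx n1 : 'M_(n1 + n2, n1)) *m A = col_mx A 0.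
Proof. by rewrite pid_mx_col mul_col_mx mul1mx mul0mx. Qed.

End Blocks.

Lemma det_border (R : idomainType) n (B : 'M[R]_n) (v : 'cV_n) (u : 'rV_n) d :
    \det B != 0 ->
  \det (block_mx B v u d%:M) = d * \det B - (u *m \adj B *m v) 0 0.
Proof.
move=> detB_neq0; pose w := \adj B *m v.
pose Q := block_mx 1%:M (- w) 0 (\det B)%:M.
have detQ : \det Q = \det B by rewrite det_ublock det1 det_scalar1 mul1r.
have BQ : block_mx B v u d%:M *m Q = block_mx B 0 u (d * \det B - (u *m w) 0 0)%:M.
  rewrite mulmx_block !mulmx1 !mulmx0 !addr0 mulmxN /w mulmxA mul_mx_adj.
  rewrite mul_scalar_mx mul_mx_scalar addrC subrr -scalar_mxM; congr block_mx.
  rewrite mulmxN addrC; apply/matrixP=> i j; rewrite !ord1.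
  by rewrite !mxE /= !mulr1n.
apply: (mulIf detB_neq0); rewrite -detQ -det_mulmx BQ det_lblock det_scalar1.
by rewrite detQ mulrC /w mulmxA.
Qed.

Lemma pchar2_F2poly : 2 \in [pchar {poly 'F_2}].
Proof. by rewrite pchar_poly pchar_Fp. Qed.

Lemma addrr_F2poly (p : {poly 'F_2}) : p + p = 0.
Proof. by rewrite addrr_pchar2 // pchar2_F2poly. Qed.

Definition Jent (c d : nat) : {poly 'F_2} := if c == d then 'X else (inJ (c + d))%:R.

Definition Jmx n : 'M[{poly 'F_2}]_n := \matrix_(i, j) Jent i j.

Definition Jdet n := \det (Jmx n).

Definition Jcol n : 'cV[{poly 'F_2}]_n := \col_i Jent i n.

Definition Jbord n (u : 'rV[{poly 'F_2}]_n) := \det (block_mx (Jmx n) (Jcol n) u 0).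

Lemma Jent_sym c d : Jent c d = Jent d c.
Proof. by rewrite /Jent eq_sym addnC. Qed.

Lemma Jmx_sym n : (Jmx n)^T = Jmx n.
Proof. by apply/matrixP=> i j; rewrite !mxE Jent_sym. Qed.

Lemma Jmx_diag n i : Jmx n i i = 'X.
Proof. by rewrite mxE /Jent eqxx. Qed.

Lemma Jent_even a b : Jent (2 * a) (2 * b) = if a == b then 'X else 1.
Proof. by rewrite /Jent eqn_mul2l -mulnDr inJ_double; case: eqP. Qed.

Lemma Jent_odd a b : Jent (2 * a + 1) (2 * b + 1) = if a == b then 'X else 1.
Proof.
rewrite /Jent eqn_add2r eqn_mul2l addnACA addnn -mul2n -mulnDr -mulnDr.
by rewrite inJ_double; case: eqP.
Qed.

Lemma Jent_even_odd a b : Jent (2 * a) (2 * b + 1) = (~~ inJ (a + b))%:R.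
Proof.
rewrite /Jent ifF; last by apply/eqP; lia.
by rewrite addnA -mulnDr inJ_double_add1.
Qed.

Lemma Jent_halve a b : (if a == b then 'X else 1) + (~~ inJ (a + b))%:R = Jent a b.
Proof.
rewrite /Jent; case: eqP => [<-|_]; first by rewrite addnn -mul2n inJ_double addr0.
by case: (inJ _); rewrite ?addr0 ?addrr_F2poly.
Qed.

Lemma Jdet_double n : Jdet (n + n) = Jdet n ^+ 2.
Proof.
pose ev := catidx (fun a : 'I_n => (2 * a)%N) (fun b : 'I_n => (2 * b + 1)%N).
have ev_inj : injective ev.
  by apply: catidx_inj => a b /=; try (move=> e; apply: val_inj => /=); lia.
have ev_lt i : (ev i < n + n)%N by apply: catidx_lt => a /=; have := ltn_ord a; lia.
rewrite /Jdet /Jmx -(det_reindex _ ev_inj ev_lt) matrix_catidx.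
rewrite (det_block_lconj (P := 1%:M)) !mul1mx !mulmx1 ?expr2.
  congr (_ * _); congr determinant; apply/matrixP=> i j; rewrite !mxE.
    by rewrite Jent_even Jent_even_odd Jent_halve.
  by rewrite Jent_odd Jent_even_odd addrC Jent_halve.
apply/matrixP=> i j; rewrite !mxE Jent_even Jent_odd Jent_sym !Jent_even_odd addnC.
by rewrite [X in _ + X]addrC addrr_F2poly.
Qed.

(* The matrix of [Jbord (const_mx 1 : 'rV_N)] as a function on nat, so that it
   can be reindexed by parity. *)
Definition Jbord1_ent N (c d : nat) := if c == N then (d != N)%:R else Jent c d.

Lemma Jbord1E N :
  Jbord (const_mx 1 : 'rV_N) = \det (\matrix_(i < N + 1, j < N + 1) Jbord1_ent N i j).
Proof.
rewrite matrix_split_last /Jbord /Jbord1_ent; congr (\det _).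
by congr block_mx; apply/matrixP => i j; rewrite !mxE ?eqxx ?(ltn_eqF (ltn_ord _)) /= ?mul0rn.
Qed.

Lemma Jbord_adj N u : Jdet N != 0 -> Jbord u = (u *m \adj (Jmx N) *m Jcol N) 0 0.
Proof.
move=> detN; rewrite /Jbord -[X in block_mx _ _ _ X](raddf0 (@scalar_mx _ 1)) det_border //.
by rewrite mul0r sub0r oppr_pchar2 // pchar2_F2poly.
Qed.

Lemma Jdet_succ N : Jdet N != 0 -> Jdet N.+1 = 'X * Jdet N + Jbord (Jcol N)^T.
Proof.
move=> detN; rewrite Jbord_adj // /Jdet -[N.+1]addn1 /Jmx matrix_split_last det_border //.
rewrite oppr_pchar2 ?pchar2_F2poly // /Jent eqxx; congr (_ * _ + (_ *m _ *m _) 0 0).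
by apply/matrixP=> i j; rewrite !mxE /Jent eq_sym addnC.
Qed.

Lemma Jdet_mul_Jbord N :
  Jdet N != 0 -> Jdet N * Jbord (Jcol N)^T = 'X * Jbord (const_mx 1 : 'rV_N) ^+ 2.
Proof.
move=> detN; rewrite !Jbord_adj //.
by rewrite (det_mul_adj_quad pchar2_F2poly _ (Jmx_sym N) (@Jmx_diag N)) mulmxA.
Qed.

Lemma Jbord1_double n :
  Jbord (const_mx 1 : 'rV_(n + n)) = Jdet n * Jbord (const_mx 1 : 'rV_n).
Proof.
pose odd_last := catidx (fun b : 'I_n => (2 * b + 1)%N) (fun _ : 'I_1 => (n + n)%N).
pose ev := catidx (fun a : 'I_n => (2 * a)%N) odd_last.
have odd_last_inj : injective odd_last.
  apply: catidx_inj => [a b /= e|a b|a b /=]; last by lia.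
    by apply: val_inj => /=; lia.
  by rewrite !ord1.
have ev_inj : injective ev.
  apply: (catidx_inj _ odd_last_inj) => [a b /= e|a j /=]; first by apply: val_inj => /=; lia.
  by rewrite /odd_last /catidx; case: split => b /=; have := ltn_ord a; lia.
have ev_lt i : (ev i < n + (n + 1))%N.
  apply: catidx_lt => [a|j] /=; first by have := ltn_ord a; lia.
  by apply: catidx_lt => [b|b] /=; have := ltn_ord b; lia.
rewrite [LHS]Jbord1E -addnA -(det_reindex _ ev_inj ev_lt) !matrix_catidx.
rewrite /odd_last matrix_catidx_col matrix_catidx_row; set G := Jbord1_ent (n + n).
have GE c d : c != (n + n)%N -> G c d = Jent c d by rewrite /G /Jbord1_ent => /negbTE ->.
have even_neq (i : 'I_n) : (2 * i != n + n)%N by have := ltn_ord i; lia.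
have odd_neq (i : 'I_n) : (2 * i + 1 != n + n)%N by lia.
have AB : \matrix_(i < n, j < n) G (2 * i)%N (2 * j)%N
          + \matrix_(i < n, j < n) G (2 * i)%N (2 * j + 1)%N = Jmx n.
  by apply/matrixP=> i j; rewrite !mxE !GE // Jent_even Jent_even_odd Jent_halve.
have BD : pid_mx n *m row_mx (\matrix_(i < n, j < n) G (2 * i)%N (2 * j + 1)%N)
                             (\col_i G (2 * i)%N (n + n)%N)
          + block_mx (\matrix_(i < n, j < n) G (2 * i + 1)%N (2 * j + 1)%N)
                     (\col_i G (2 * i + 1)%N (n + n)%N)
                     (\row_j G (n + n)%N (2 * j + 1)%N) (\row__ G (n + n)%N (n + n)%N)
          = block_mx (Jmx n) (Jcol n) (const_mx 1) 0.
  rewrite mul_pid_col_mx -row_mx0 -[col_mx _ (row_mx 0 0)]/(block_mx _ _ 0 0).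
  rewrite add_block_mx; congr block_mx; apply/matrixP=> i j; rewrite !mxE.
  - by rewrite !GE // Jent_even_odd Jent_odd addrC Jent_halve.
  - rewrite !GE // addnn -mul2n Jent_even [Jent (2 * i + 1) _]Jent_sym Jent_even_odd.
    by rewrite [(n + _)%N]addnC Jent_halve.
  - by rewrite add0r /G /Jbord1_ent eqxx (odd_neq j).
  - by rewrite add0r /G /Jbord1_ent eqxx.
rewrite (det_block_lconj (P := pid_mx n)) BD; first by rewrite mul_mx_pid_col row_mxKl AB.
rewrite mul_mx_pid_col block_mxEh row_mxKl !mul_pid_col_mx !add_col_mx -col_mx0.
congr col_mx; apply/matrixP=> i j; rewrite !mxE.
  rewrite !GE // Jent_even [Jent (2 * i + 1) _]Jent_sym Jent_even_odd -[Jent i j]Jent_halve.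
  by rewrite [(j + _)%N]addnC addrr_F2poly.
by rewrite add0r /G /Jbord1_ent eqxx (even_neq j) addrr_F2poly.
Qed.

Lemma Jdet_odd k :
  Jdet k = 'X^k -> Jdet k.+1 = 'X^(k.+1) -> Jdet (k + k).+1 = 'X^((k + k).+1).
Proof.
have Xn_neq0 j : 'X^j != 0 :> {poly 'F_2} by rewrite expf_neq0 // polyX_eq0.
move=> detk detk1; have detk_neq0 : Jdet k != 0 by rewrite detk.
have col_k : Jbord (Jcol k)^T = 0.
  by apply/(addrI ('X * Jdet k)); rewrite -Jdet_succ // addr0 detk1 detk exprS.
have ones_k : Jbord (const_mx 1 : 'rV_k) = 0.
  apply/eqP; have /eqP := Jdet_mul_Jbord detk_neq0.
  by rewrite col_k mulr0 eq_sym mulf_eq0 polyX_eq0 sqrf_eq0.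
have detkk : Jdet (k + k) = 'X^(k + k) by rewrite Jdet_double detk -exprM muln2 addnn.
have detkk_neq0 : Jdet (k + k) != 0 by rewrite detkk.
have col_kk : Jbord (Jcol (k + k))^T = 0.
  apply/eqP; have /eqP := Jdet_mul_Jbord detkk_neq0.
  by rewrite Jbord1_double ones_k mulr0 expr0n mulr0 mulf_eq0 (negbTE detkk_neq0).
by rewrite Jdet_succ // col_kk addr0 detkk exprS.
Qed.

Lemma Jdet_X n : Jdet n = 'X^n.
Proof.
elim/ltn_ind: n => n IH.
have [k [nE|nE]] : exists k, n = (k + k)%N \/ n = (k + k).+1.
  by exists n./2; have := odd_double_half n; case: (odd n) => /=; lia.
all: rewrite {}nE in IH *; case: k IH => [|k] IH.
- by rewrite /Jdet det_mx00.
- by rewrite Jdet_double IH -?exprM ?muln2 ?addnn //; lia.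
- by rewrite /Jdet det_mx11 mxE /Jent.
- by apply: Jdet_odd; apply: IH; lia.
Qed.

Lemma prod_Jmx m (s : 'S_m) :
  \prod_i Jmx m i (s i) = if transp_in inJ s then 'X^#|[pred i | s i == i]| else 0.
Proof.
rewrite (bigID (fun i => s i == i)) /=.
rewrite (eq_bigr (fun _ => 'X)) => [|i /eqP ->]; last by rewrite Jmx_diag.
rewrite prodr_const; case: (boolP (transp_in inJ s)) => [/forallP sJ|/forallPn [c]].
  rewrite big1 ?mulr1 // => i si; rewrite mxE /Jent ifN; last by rewrite eq_sym.
  by have := sJ i; rewrite si => /= ->.
rewrite negb_imply => /andP [sc cJ].
by rewrite (bigD1 c) //= mxE /Jent ifN 1?eq_sym // (negbTE cJ) mul0r mulr0.
Qed.

Lemma card_fix_transp m (s : 'S_m) :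
  involution s -> (#|[pred i | s i == i]| + 2 * num_transp s)%N = m.
Proof.
move=> /eqP ss; have sK : involutive s by move=> i; rewrite -permM ss perm1.
pose up := [set c : 'I_m | c < s c]%N; pose down := [set c : 'I_m | s c < c]%N.
have card_down : #|down| = num_transp s.
  have -> : down = s @^-1: up by apply/setP => c; rewrite !inE sK.
  exact/card_preimset/perm_inj.
have moved : up :|: down = ~: [set i | s i == i].
  by apply/setP => c; rewrite !inE orbC -neq_ltn.
have disj : up :&: down = set0.
  by apply/setP => c; rewrite !inE; case: ltngtP.
have := cardsUI up down; rewrite moved disj cards0 addn0 card_down => card_moved.
by rewrite -[RHS]card_ord -(cardsC [set i | s i == i]) card_moved cardsE mul2n addnn.
Qed.

Lemma mu_coef m k :
  (2 * k <= m)%N -> (mu m k inJ)%:R = ('X^m : {poly 'F_2})`_(m - 2 * k).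
Proof.
move=> le_2k_m; rewrite -Jdet_X /Jdet (det_sym_involutions pchar2_F2poly (Jmx_sym m)).
under eq_bigr do rewrite prod_Jmx.
rewrite -big_mkcondr coef_sum.
under eq_bigr do rewrite coefXn.
rewrite -natr_sum; under eq_bigr => s _ do rewrite -[nat_of_bool _]/(if _ then 1 else 0)%N.
rewrite -big_mkcondr sum1dep_card /mu; congr _%:R; apply: eq_card => s; rewrite !inE.
case: (boolP (involution s)) => //= /card_fix_transp inv_s.
rewrite andbC; congr (_ && _); move: inv_s; set f := #|_|.
by move=> inv_s; apply/eqP/eqP; lia.
Qed.

Lemma mu_F2 m k : (mu m k inJ)%:R = (k == 0)%:R :> 'F_2.
Proof.
have [le_2k_m|lt_m_2k] := leqP (2 * k) m.
  by rewrite mu_coef // coefXn; congr _%:R; apply/eqP/eqP; lia.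
have -> : mu m k inJ = 0%N.
  apply/eqP; rewrite cards_eq0; apply/eqP/setP => s; rewrite !inE.
  by apply/negbTE/and3P => [[/card_fix_transp inv_s /eqP nk _]]; lia.
by rewrite (_ : k == 0 = false) //; lia.
Qed.

Local Close Scope ring_scope.

Theorem theorem2p1 (m k : nat) :
  1 <= m ->
  mu m k inJ %% 2 = (if k == 0 then 1 else 0).
Proof.
move=> _; rewrite -(val_Fp_nat (isT : prime 2)) mu_F2 val_Fp_nat //.
by case: (k == 0).
Qed.
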